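(* For every integer $k\ge1$, \begin{align*} \sum_{n=1}^\infty\frac{H_n^{(k)}}{n^3}&=\zeta(k+3)+\zeta(3,k),\\ \sum_{n=1}^\infty\frac{P_k(H_n,\dots,H_n^{(k)})}{n^3}&=\zeta(k+2,1)+\zeta(k+1,1,1),\\ \sum_{n=1}^\infty\frac{Q_k(H_n,\dots,H_n^{(k)})}{n^3}&=\zeta(k+3)+\sum_{j=2}^{k+1}S^T_{k+3,j}. \end{align*}
   Context: $H_n^{(r)}=\sum_{t=1}^n t^{-r}$, $H_n=H_n^{(1)}$. For $n\ge1$, $P_n(y_1,\dots,y_n)=\sum_{m_1+2m_2+\cdots=n}\frac{(-1)^{m_2+m_4+\cdots}}{m_1!m_2!\cdots}\prod_{i\ge1}(y_i/i)^{m_i}$ and $Q_n(y_1,\dots,y_n)=\sum_{m_1+2m_2+\cdots=n}\frac{1}{m_1!m_2!\cdots}\prod_{i\ge1}(y_i/i)^{m_i}$. Multiple zeta values: $\zeta(a_1,\dots,a_k)=\sum_{n_1>\cdots>n_k\ge1}n_1^{-a_1}\cdots n_k^{-a_k}$ ($a_r\ge1$, $a_1\ge2$), of weight $a_1+\cdots+a_k$ and depth $k$. $S^T_{N,d}$ is the sum of all multiple zeta values $\zeta(a_1,\dots,a_d)$ of weight $N$ and depth $d$ with $a_1\ge3$. *)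

From Stdlib Require Import Reals List Arith Lia ClassicalEpsilon.
Import ListNotations.
Open Scope R_scope.

Definition sum1 (n : nat) (f : nat -> R) : R :=
  fold_right Rplus 0 (map f (seq 1 n)).

Definition Hn (n r : nat) : R := sum1 n (fun t => / (INR t ^ r)).

Fixpoint tuples (len b : nat) : list (list nat) :=
  match len with
  | O => [[]]
  | S l => flat_map (fun x => map (cons x) (tuples l b)) (seq 0 (S b))
  end.

Fixpoint weight_from (i : nat) (m : list nat) : nat :=
  match m with
  | [] => O
  | x :: r => (i * x + weight_from (S i) r)%nat
  end.

(* multiplicity vectors [m_1; ...; m_n] with m_1 + 2 m_2 + ... + n m_n = n
   (i.e. the partitions of n; m_i = 0 necessarily for i > n) *)
Definition part_vectors (n : nat) : list (list nat) :=
  filter (fun m => Nat.eqb (weight_from 1 m) n) (tuples n n).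

Fixpoint PQterm (signed : bool) (i : nat) (m : list nat) (y : nat -> R) : R :=
  match m with
  | [] => 1
  | x :: r =>
      (if andb signed (Nat.even i) then (-1) ^ x else 1)
      * / INR (fact x) * (y i / INR i) ^ x * PQterm signed (S i) r y
  end.

Definition Ppoly (n : nat) (y : nat -> R) : R :=
  fold_right Rplus 0 (map (fun m => PQterm true 1 m y) (part_vectors n)).

Definition Qpoly (n : nat) (y : nat -> R) : R :=
  fold_right Rplus 0 (map (fun m => PQterm false 1 m y) (part_vectors n)).

(* truncated multiple zeta value:
   sum_{N >= n_1 > n_2 > ... > n_k >= 1} n_1^{-a_1} ... n_k^{-a_k} *)
Fixpoint mzvN (a : list nat) (N : nat) : R :=
  match a with
  | [] => 1
  | a1 :: r => sum1 N (fun n => / (INR n ^ a1) * mzvN r (n - 1))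
  end.

Definition mzv (a : list nat) : R :=
  epsilon (inhabits 0) (fun l => Un_cv (mzvN a) l).

Fixpoint compositions (N d : nat) : list (list nat) :=
  match d with
  | O => if Nat.eqb N 0 then [[]] else []
  | S d' => flat_map (fun a => map (cons a) (compositions (N - a) d')) (seq 1 N)
  end.

Definition ST (N d : nat) : R :=
  fold_right Rplus 0
    (map mzv (filter (fun a => Nat.leb 3 (hd O a)) (compositions N d))).

(* Write zeta_N for a multiple zeta value truncated at N.  By Newton's identities, P_k and
   Q_k evaluated at the power sums H_n^(i) of 1, 1/2, ..., 1/n are the elementary and the
   complete homogeneous symmetric functions e_k and h_k of these numbers; moreover
   e_k = zeta_n(1, ..., 1) and h_k is the sum of zeta_n(c) over all compositions c of k.
   Hence each series telescopes: its N-th partial sum is zeta_N(k+3) + zeta_N(3,k),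
   zeta_N(3,1^k) + zeta_N(4,1^(k-1)), resp. the sum of zeta_N(c) over the compositions c of
   k+3 with first part at least 3.

   The second identity then follows from the duality zeta(a+2, 1^b) = zeta(b+2, 1^a), proved
   with the connected sums of Seki and Yamamoto,
     Z(k | l)(N, M) = sum_(m <= N, n <= M) (term of zeta_m(k)) * m! n! / (m+n)! * (term of zeta_n(l)).
   They reduce to zeta_N(k) for empty l and to zeta_M(l) for empty k, and moving a unit from
   the first entry of k to a new leading entry 1 of l changes them by at most
   zeta_N(k) zeta_M(l) / (M+1), so the supremum over (N, M) is preserved.  Duality also
   bounds zeta_N(2, 1^b) by zeta(b+2) <= 2, which makes every truncated MZV with first entry
   at least 2 converge. *)

From Stdlib Require Import Reals List Arith Lia Lra ClassicalEpsilon.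
Import ListNotations.
Open Scope R_scope.

Definition lsum {A : Type} (l : list A) (f : A -> R) : R := fold_right Rplus 0 (map f l).

Lemma lsum_nil {A} (f : A -> R) : lsum [] f = 0.
Proof. reflexivity. Qed.

Lemma lsum_cons {A} (a : A) l f : lsum (a :: l) f = f a + lsum l f.
Proof. reflexivity. Qed.

Lemma lsum_app {A} (l1 l2 : list A) f : lsum (l1 ++ l2) f = lsum l1 f + lsum l2 f.
Proof.
  induction l1 as [|a l1 IH]; [cbn [app]; rewrite lsum_nil; ring|].
  rewrite <- app_comm_cons, !lsum_cons, IH; ring.
Qed.

Lemma lsum_ext_in {A} (l : list A) f g :
  (forall x, In x l -> f x = g x) -> lsum l f = lsum l g.
Proof.
  induction l as [|a l IH]; intros H; [reflexivity|].
  rewrite !lsum_cons, H, IH; [reflexivity| |now left].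
  intros; apply H; now right.
Qed.

Lemma lsum_ext {A} (l : list A) f g : (forall x, f x = g x) -> lsum l f = lsum l g.
Proof. intros; apply lsum_ext_in; auto. Qed.

Lemma lsum_plus {A} (l : list A) f g : lsum l (fun x => f x + g x) = lsum l f + lsum l g.
Proof. induction l as [|a l IH]; [rewrite !lsum_nil; ring|]. rewrite !lsum_cons, IH; ring. Qed.

Lemma lsum_scal {A} (l : list A) c f : lsum l (fun x => c * f x) = c * lsum l f.
Proof. induction l as [|a l IH]; [rewrite !lsum_nil; ring|]. rewrite !lsum_cons, IH; ring. Qed.

Lemma lsum_zero {A} (l : list A) f : (forall x, In x l -> f x = 0) -> lsum l f = 0.
Proof.
  intros H; rewrite (lsum_ext_in l f (fun _ => 0)) by exact H. clear H.
  induction l as [|a l IH]; [reflexivity|]. rewrite lsum_cons, IH; ring.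
Qed.

Lemma lsum_map {A B} (h : A -> B) l f : lsum (map h l) f = lsum l (fun x => f (h x)).
Proof. unfold lsum; rewrite map_map; reflexivity. Qed.

Lemma lsum_flat_map {A B} (g : A -> list B) l f :
  lsum (flat_map g l) f = lsum l (fun x => lsum (g x) f).
Proof.
  induction l as [|a l IH]; [reflexivity|].
  cbn [flat_map]. rewrite lsum_app, lsum_cons, IH. reflexivity.
Qed.

Lemma lsum_filter {A} (p : A -> bool) l f :
  lsum (filter p l) f = lsum l (fun x => if p x then f x else 0).
Proof.
  induction l as [|a l IH]; [reflexivity|].
  rewrite lsum_cons. cbn [filter]. destruct (p a); [rewrite lsum_cons|]; rewrite IH; ring.
Qed.

Lemma lsum_swap {A B} (l1 : list A) (l2 : list B) F :
  lsum l1 (fun i => lsum l2 (fun x => F i x)) = lsum l2 (fun x => lsum l1 (fun i => F i x)).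
Proof.
  induction l1 as [|a l1 IH].
  - rewrite lsum_nil; symmetry; apply lsum_zero; reflexivity.
  - rewrite lsum_cons, IH, <- lsum_plus. reflexivity.
Qed.

Lemma seq_0_S B : seq 0 (S B) = 0%nat :: map S (seq 0 B).
Proof. rewrite seq_shift. reflexivity. Qed.

Lemma seq_add_start a b n : seq (a + b) n = map (Nat.add a) (seq b n).
Proof.
  induction a as [|a IH]; [simpl; rewrite map_id; reflexivity|].
  simpl. rewrite <- seq_shift, IH, map_map. reflexivity.
Qed.

Lemma lsum_seq_S_l n f : lsum (seq 1 (S n)) f = f 1%nat + lsum (seq 1 n) (fun i => f (S i)).
Proof.
  change (seq 1 (S n)) with (1%nat :: seq 2 n). rewrite lsum_cons, <- seq_shift, lsum_map. reflexivity.
Qed.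

Lemma lsum_seq_S_r n f : lsum (seq 1 (S n)) f = lsum (seq 1 n) f + f (S n).
Proof. rewrite seq_S, lsum_app, lsum_cons, lsum_nil. replace (1 + n)%nat with (S n) by lia. ring. Qed.

Lemma lsum_cv {A} (l : list A) (u : A -> nat -> R) (v : A -> R) :
  (forall c, In c l -> Un_cv (u c) (v c)) -> Un_cv (fun N => lsum l (fun c => u c N)) (lsum l v).
Proof.
  induction l as [|a l IH]; intros H.
  - intros eps He. exists 0%nat. intros. unfold R_dist. rewrite !lsum_nil, Rminus_0_r, Rabs_R0. exact He.
  - apply (CV_plus (u a) (fun N => lsum l (fun c => u c N))).
    + apply H; now left.
    + apply IH. intros; apply H; now right.
Qed.

Lemma sum_f_R0_swap (f : nat -> nat -> R) N M :
  sum_f_R0 (fun m => sum_f_R0 (fun n => f m n) M) N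
  = sum_f_R0 (fun n => sum_f_R0 (fun m => f m n) N) M.
Proof. induction N as [|N IH]; simpl; [reflexivity|]. rewrite IH, <- sum_plus. reflexivity. Qed.

Lemma infinite_sum_telescoping (s F : nat -> R) l :
  F 0%nat = 0 -> (forall n, s n = F (S n) - F n) -> Un_cv F l -> infinite_sum s l.
Proof.
  intros H0 Hs HF.
  assert (Hsum : forall n, sum_f_R0 s n = F (S n)).
  { induction n as [|n IH]; simpl; rewrite Hs; [rewrite H0| rewrite IH]; ring. }
  intros eps He. destruct (HF eps He) as (N & HN). exists N. intros n Hn.
  rewrite Hsum. apply HN; lia.
Qed.

Lemma INR_S_pos n : 0 < INR (S n).
Proof. apply lt_0_INR; lia. Qed.

Lemma inv_pow_add x i j : x <> 0 -> / x ^ (i + j) = / x ^ i * / x ^ j.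
Proof. intros. rewrite pow_add, Rinv_mult. reflexivity. Qed.

Lemma exists_large_index K eps M :
  0 < eps -> exists M', (M <= M')%nat /\ K / INR (S M') < eps.
Proof.
  intros He. set (B := K / eps).
  destruct (INR_unbounded (Rmax (INR M) B)) as [M' HM'].
  pose proof (Rmax_l (INR M) B). pose proof (Rmax_r (INR M) B).
  exists M'. split; [apply INR_le; lra|].
  pose proof (INR_S_pos M') as HS.
  assert (HK : K = B * eps) by (unfold B; field; lra).
  apply Rmult_lt_reg_r with (INR (S M')); [exact HS|].
  unfold Rdiv. rewrite Rmult_assoc, Rinv_l, HK, S_INR by lra. nra.
Qed.

Lemma sum1_S n f : sum1 (S n) f = sum1 n f + f (S n).
Proof.
  unfold sum1. rewrite seq_S, map_app, fold_right_app. cbn.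
  generalize (f (S n)); intros x.
  induction (map f (seq 1 n)) as [|a l IH]; simpl; [|rewrite IH]; ring.
Qed.

Lemma sum1_ext n f g : (forall t, (1 <= t)%nat -> f t = g t) -> sum1 n f = sum1 n g.
Proof. induction n as [|n IH]; intros H; [reflexivity|]. rewrite !sum1_S, IH, H; auto; lia. Qed.

Lemma mzvN_0 a r : mzvN (a :: r) 0 = 0.
Proof. reflexivity. Qed.

Lemma mzvN_S a r N : mzvN (a :: r) (S N) = mzvN (a :: r) N + / INR (S N) ^ a * mzvN r N.
Proof. simpl mzvN at 1. rewrite sum1_S, Nat.sub_succ, Nat.sub_0_r. reflexivity. Qed.

Lemma Hn_mzvN N r : Hn N r = mzvN [r] N.
Proof. apply sum1_ext; intros; simpl; ring. Qed.

Lemma Hn_0 r : Hn 0 r = 0.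
Proof. reflexivity. Qed.

Lemma Hn_S M r : Hn (S M) r = Hn M r + (/ INR (S M)) ^ r.
Proof. unfold Hn. rewrite sum1_S, pow_inv. reflexivity. Qed.

Definition mzv_term (l : list nat) (m : nat) : R :=
  match l with
  | [] => if Nat.eqb m 0 then 1 else 0
  | a :: r => if Nat.eqb m 0 then 0 else / INR m ^ a * mzvN r (m - 1)
  end.

Lemma mzv_term_cons_S a r n : mzv_term (a :: r) (S n) = / INR (S n) ^ a * mzvN r n.
Proof. simpl. rewrite Nat.sub_0_r. reflexivity. Qed.

Lemma mzvN_succ l N : mzvN l (S N) = mzvN l N + mzv_term l (S N).
Proof. destruct l as [|a r]; [simpl; ring|]. rewrite mzvN_S, mzv_term_cons_S. reflexivity. Qed.

Lemma mzvN_sum_terms l N : mzvN l N = sum_f_R0 (mzv_term l) N.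
Proof.
  induction N as [|N IH]; [destruct l; reflexivity|].
  rewrite mzvN_succ, IH. reflexivity.
Qed.

Lemma mzv_term_succ_head a k m : mzv_term (a :: k) m = INR m * mzv_term (S a :: k) m.
Proof.
  destruct m as [|m]; [simpl; ring|]. rewrite !mzv_term_cons_S.
  pose proof (INR_S_pos m). change (INR (S m) ^ S a) with (INR (S m) * INR (S m) ^ a).
  field. split; [apply pow_nonzero|]; lra.
Qed.

Lemma mzvN_nonneg l N : 0 <= mzvN l N.
Proof.
  revert N; induction l as [|a r IH]; intros N; [simpl; lra|].
  induction N as [|N IHN]; [rewrite mzvN_0; lra|]. rewrite mzvN_S.
  assert (0 < / INR (S N) ^ a) by (apply Rinv_0_lt_compat, pow_lt, INR_S_pos).
  pose proof (IH N). nra.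
Qed.

Lemma mzv_term_nonneg l m : 0 <= mzv_term l m.
Proof.
  destruct l as [|a r]; [simpl; destruct (Nat.eqb m 0); lra|].
  destruct m as [|m]; [simpl; lra|]. rewrite mzv_term_cons_S.
  apply Rmult_le_pos; [left; apply Rinv_0_lt_compat, pow_lt, INR_S_pos|apply mzvN_nonneg].
Qed.

Lemma mzvN_increasing l : Un_growing (mzvN l).
Proof. intros n. rewrite mzvN_succ. pose proof (mzv_term_nonneg l (S n)). lra. Qed.

Lemma mzvN_le_mono l N N' : (N <= N')%nat -> mzvN l N <= mzvN l N'.
Proof. intros H. apply Rge_le, growing_prop; [apply mzvN_increasing|lia]. Qed.

Lemma mzvN_antitone c c' :
  Forall2 (fun x y => (y <= x)%nat) c c' -> forall N, mzvN c N <= mzvN c' N.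
Proof.
  induction 1 as [|x y l l' Hxy _ IH]; intros N; [simpl; lra|].
  induction N as [|N IHN]; [rewrite !mzvN_0; lra|]. rewrite !mzvN_S.
  assert (/ INR (S N) ^ x <= / INR (S N) ^ y).
  { apply Rinv_le_contravar; [apply pow_lt, INR_S_pos|].
    apply Rle_pow; [|exact Hxy]. rewrite S_INR. pose proof (pos_INR N); lra. }
  pose proof (IH N). pose proof (mzvN_nonneg l N).
  pose proof (Rinv_0_lt_compat _ (pow_lt _ y (INR_S_pos N))). nra.
Qed.

(** * Connected sums and duality *)

Definition connector (m n : nat) : R := INR (fact m) * INR (fact n) / INR (fact (m + n)).

Lemma connector_pos m n : 0 < connector m n.
Proof.
  unfold connector. pose proof (lt_0_INR _ (lt_O_fact m)). pose proof (lt_0_INR _ (lt_O_fact n)).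
  pose proof (lt_0_INR _ (lt_O_fact (m + n))). apply Rdiv_lt_0_compat; nra.
Qed.

Lemma connector_0_r m : connector m 0 = 1.
Proof. unfold connector. rewrite Nat.add_0_r. simpl (INR (fact 0)). field. apply INR_fact_neq_0. Qed.

Lemma connector_sym m n : connector m n = connector n m.
Proof. unfold connector, Rdiv. rewrite (Nat.add_comm m n). ring. Qed.

Lemma connector_rec m n : connector m (S n) * INR (m + S n) = connector m n * INR (S n).
Proof.
  unfold connector.
  rewrite Nat.add_succ_r, (fact_simpl (m + n)), (fact_simpl n), !mult_INR, <- Nat.add_succ_r.
  field. split; [apply INR_fact_neq_0|]. apply not_0_INR. lia.
Qed.

Lemma connector_decr m n : connector m (S n) <= connector m n.
Proof.
  pose proof (connector_rec m n). pose proof (connector_pos m (S n)). pose proof (connector_pos m n).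
  assert (INR (S n) <= INR (m + S n)) by (apply le_INR; lia). pose proof (INR_S_pos n). nra.
Qed.

Lemma connector_diff m n : INR (S n) * (connector m n - connector m (S n)) = INR m * connector m (S n).
Proof. pose proof (connector_rec m n) as H. rewrite plus_INR in H. nra. Qed.

Lemma connector_le_inv m n : (1 <= m)%nat -> connector m n <= / INR (S n).
Proof.
  intros Hm. pose proof (INR_S_pos n).
  apply Rmult_le_reg_r with (INR (S n)); [lra|]. rewrite Rinv_l by lra.
  induction n as [|n IH].
  - rewrite connector_0_r. simpl. lra.
  - pose proof (connector_rec m n). pose proof (connector_pos m (S n)).
    assert (INR (S (S n)) <= INR (m + S n)) by (apply le_INR; lia).
    specialize (IH (INR_S_pos n)). nra.
Qed.

Definition connector_sum (l : list nat) (m M : nat) : R :=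
  sum_f_R0 (fun n => connector m n * mzv_term l n) M.

Definition connected_sum (k l : list nat) (N M : nat) : R :=
  sum_f_R0 (fun m => mzv_term k m * connector_sum l m M) N.

Lemma connected_sum_sym k l N M : connected_sum k l N M = connected_sum l k M N.
Proof.
  unfold connected_sum, connector_sum.
  transitivity (sum_f_R0 (fun m => sum_f_R0 (fun n => mzv_term k m * connector m n * mzv_term l n) M) N).
  { apply sum_eq; intros. rewrite scal_sum. apply sum_eq; intros. ring. }
  rewrite sum_f_R0_swap. apply sum_eq; intros. rewrite scal_sum. apply sum_eq; intros.
  rewrite connector_sym. ring.
Qed.

Lemma connected_sum_nil_r a r N M : connected_sum (a :: r) [] N M = mzvN (a :: r) N.
Proof.
  unfold connected_sum. rewrite mzvN_sum_terms. apply sum_eq; intros m _.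
  replace (connector_sum [] m M) with 1; [ring|].
  unfold connector_sum. induction M as [|M IH]; cbn [sum_f_R0].
  - rewrite connector_0_r. simpl. ring.
  - rewrite <- IH. simpl mzv_term. ring.
Qed.

Lemma connected_sum_nil_l a r N M : connected_sum [] (a :: r) N M = mzvN (a :: r) M.
Proof. rewrite connected_sum_sym. apply connected_sum_nil_r. Qed.

(* [sup A <= sup B], phrased without assuming that the suprema are finite. *)
Definition sup_le (A B : nat -> nat -> R) : Prop :=
  forall N M eps, 0 < eps -> exists N' M', A N M <= B N' M' + eps.

Definition sup_eq (A B : nat -> nat -> R) : Prop := sup_le A B /\ sup_le B A.

Lemma sup_le_trans A B D : sup_le A B -> sup_le B D -> sup_le A D.
Proof.
  intros H1 H2 N M eps He. destruct (H1 N M (eps / 2)) as (N1 & M1 & h1); [lra|].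
  destruct (H2 N1 M1 (eps / 2)) as (N2 & M2 & h2); [lra|]. exists N2, M2. lra.
Qed.

Lemma sup_le_of_le A B : (forall N M, A N M <= B N M) -> sup_le A B.
Proof. intros H N M eps He. exists N, M. specialize (H N M). lra. Qed.

Lemma sup_eq_refl A : sup_eq A A.
Proof. split; apply sup_le_of_le; intros; lra. Qed.

Lemma sup_eq_trans A B D : sup_eq A B -> sup_eq B D -> sup_eq A D.
Proof. intros [] []; split; eapply sup_le_trans; eauto. Qed.

Lemma sup_eq_sym A B : sup_eq A B -> sup_eq B A.
Proof. intros []; split; assumption. Qed.

Lemma sup_le_transpose A B : sup_le A B -> sup_le (fun N M => A M N) (fun N M => B M N).
Proof. intros H N M eps He. destruct (H M N eps He) as (N' & M' & h). now exists M', N'. Qed.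

Lemma sup_le_bound (f g : nat -> R) K :
  sup_le (fun N _ => f N) (fun _ M => g M) -> (forall M, g M <= K) -> forall N, f N <= K.
Proof.
  intros H Hg N. apply Rnot_lt_le; intros Hc.
  destruct (H N 0%nat ((f N - K) / 2)) as (N' & M' & h); [lra|]. specialize (Hg M'). lra.
Qed.

Lemma sup_eq_ext A A' B B' :
  (forall N M, A N M = A' N M) -> (forall N M, B N M = B' N M) -> sup_eq A B -> sup_eq A' B'.
Proof.
  intros HA HB [H1 H2]. split; intros N M eps He;
    [destruct (H1 N M eps He) as (N' & M' & h) | destruct (H2 N M eps He) as (N' & M' & h)];
    exists N', M'; rewrite <- HA, <- HB; exact h.
Qed.

(* Summation by parts in [n], via [connector_diff]. *)
Lemma connector_sum_cons_one l m M : (1 <= m)%nat ->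
  INR m * connector_sum (1%nat :: l) m M = connector_sum l m M - connector m M * mzvN l M.
Proof.
  intros Hm. unfold connector_sum. induction M as [|M IH].
  - rewrite mzvN_sum_terms. simpl. ring.
  - cbn [sum_f_R0]. rewrite Rmult_plus_distr_l, IH, mzvN_succ, mzv_term_cons_S, pow_1.
    pose proof (connector_diff m M). pose proof (INR_S_pos M).
    replace (INR m * (connector m (S M) * (/ INR (S M) * mzvN l M)))
      with (INR m * connector m (S M) / INR (S M) * mzvN l M) by (field; lra).
    rewrite <- H. field. lra.
Qed.

Lemma connected_sum_transport a k l N M :
  connected_sum (a :: k) (1%nat :: l) N M =
  connected_sum (S a :: k) l N M
  - sum_f_R0 (fun m => mzv_term (S a :: k) m * connector m M) N * mzvN l M.
Proof.
  unfold connected_sum. rewrite (Rmult_comm _ (mzvN l M)), scal_sum, <- minus_sum.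
  apply sum_eq; intros [|m] _; [simpl; ring|].
  rewrite mzv_term_succ_head, (Rmult_comm (INR (S m))), Rmult_assoc, connector_sum_cons_one by lia.
  ring.
Qed.

Lemma connector_sum_defect_mono l m M M' : (M <= M')%nat ->
  connector_sum l m M - connector m M' * mzvN l M <= connector_sum l m M' - connector m M' * mzvN l M'.
Proof.
  unfold connector_sum. intros H. induction H as [|M' HM IH]; [lra|].
  cbn [sum_f_R0]. rewrite mzvN_succ.
  pose proof (connector_decr m M'). pose proof (mzvN_nonneg l M).
  pose proof (mzvN_le_mono l M M' HM).
  pose proof (mzv_term_nonneg l (S M')). pose proof (connector_pos m (S M')). nra.
Qed.

Lemma transport_error_le a k N M :
  sum_f_R0 (fun m => mzv_term (S a :: k) m * connector m M) N <= mzvN (S a :: k) N / INR (S M).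
Proof.
  rewrite mzvN_sum_terms. unfold Rdiv. rewrite Rmult_comm, scal_sum.
  apply sum_Rle; intros [|m] _; [simpl; lra|].
  apply Rmult_le_compat_l; [apply mzv_term_nonneg|apply connector_le_inv; lia].
Qed.

Lemma connected_sum_transport_lower a k l N M M' : (M <= M')%nat ->
  connected_sum (S a :: k) l N M - mzvN (S a :: k) N * mzvN l M / INR (S M')
  <= connected_sum (a :: k) (1%nat :: l) N M'.
Proof.
  intros HM.
  assert (Hdefect : connected_sum (S a :: k) l N M
            - sum_f_R0 (fun m => mzv_term (S a :: k) m * connector m M') N * mzvN l M
          <= connected_sum (a :: k) (1%nat :: l) N M').
  { rewrite connected_sum_transport. unfold connected_sum.
    rewrite !(Rmult_comm _ (mzvN l _)), !scal_sum, <- !minus_sum.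
    apply sum_Rle; intros m _. pose proof (connector_sum_defect_mono l m M M' HM).
    pose proof (mzv_term_nonneg (S a :: k) m). nra. }
  assert (Herror : sum_f_R0 (fun m => mzv_term (S a :: k) m * connector m M') N * mzvN l M
                   <= mzvN (S a :: k) N * mzvN l M / INR (S M')).
  { pose proof (INR_S_pos M').
    replace (mzvN (S a :: k) N * mzvN l M / INR (S M'))
      with (mzvN (S a :: k) N / INR (S M') * mzvN l M) by (field; lra).
    apply Rmult_le_compat_r; [apply mzvN_nonneg|apply transport_error_le]. }
  lra.
Qed.

Lemma sup_eq_transport a k l :
  sup_eq (connected_sum (S a :: k) l) (connected_sum (a :: k) (1%nat :: l)).
Proof.
  split.
  - intros N M eps He.
    destruct (exists_large_index (mzvN (S a :: k) N * mzvN l M) eps M He) as (M' & HM & Hsmall).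
    exists N, M'. pose proof (connected_sum_transport_lower a k l N M M' HM). lra.
  - apply sup_le_of_le; intros N M. rewrite connected_sum_transport.
    assert (0 <= sum_f_R0 (fun m => mzv_term (S a :: k) m * connector m M) N * mzvN l M).
    { apply Rmult_le_pos; [|apply mzvN_nonneg]. apply cond_pos_sum; intros.
      apply Rmult_le_pos; [apply mzv_term_nonneg|left; apply connector_pos]. }
    lra.
Qed.

Lemma sup_eq_transport_r b k l :
  sup_eq (connected_sum k (S b :: l)) (connected_sum (1%nat :: k) (b :: l)).
Proof.
  destruct (sup_eq_transport b l k) as [H1 H2].
  split; intros N M eps He;
    [destruct (H1 M N eps He) as (N' & M' & h) | destruct (H2 M N eps He) as (N' & M' & h)];
    exists M', N'; rewrite !(connected_sum_sym k), (connected_sum_sym (1%nat :: k)); exact h.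
Qed.

Lemma sup_eq_move_ones_l j : forall c k l,
  sup_eq (connected_sum ((j + c)%nat :: k) l) (connected_sum (c :: k) (repeat 1%nat j ++ l)).
Proof.
  induction j as [|j IH]; intros c k l; [apply sup_eq_refl|].
  replace (S j + c)%nat with (j + S c)%nat by lia.
  eapply sup_eq_trans; [apply IH|apply sup_eq_transport].
Qed.

Lemma sup_eq_move_ones_r j : forall c k l,
  sup_eq (connected_sum (repeat 1%nat j ++ k) (S c :: l)) (connected_sum k (S (j + c) :: l)).
Proof.
  induction j as [|j IH]; intros c k l; [apply sup_eq_refl|].
  eapply sup_eq_trans; [apply sup_eq_sym, sup_eq_transport_r|].
  replace (S (S j + c)) with (S (j + S c)) by lia. apply IH.
Qed.

Lemma sup_eq_duality a b :
  sup_eq (fun N _ => mzvN (S (S a) :: repeat 1%nat b) N) (fun _ M => mzvN (S (S b) :: repeat 1%nat a) M).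
Proof.
  apply (sup_eq_ext (connected_sum (S (S a) :: repeat 1%nat b) [])
                    _ (connected_sum [] (S (S b) :: repeat 1%nat a)));
    [intros; apply connected_sum_nil_r|intros; apply connected_sum_nil_l|].
  eapply sup_eq_trans.
  - replace (S (S a)) with (S a + 1)%nat by lia. apply sup_eq_move_ones_l.
  - rewrite app_nil_r.
    pose proof (sup_eq_move_ones_r (S b) 0 [] (repeat 1%nat a)) as H.
    rewrite app_nil_r, Nat.add_0_r in H. exact H.
Qed.

Lemma mzvN_two_le N : mzvN [2%nat] N <= 2.
Proof.
  assert (H : forall n, mzvN [2%nat] (S n) <= 2 - / INR (S n)).
  { intros n. induction n as [|n IH].
    - rewrite mzvN_S, mzvN_0. change (INR 1) with 1. rewrite pow1, Rinv_1. simpl. lra.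
    - rewrite mzvN_S. change (mzvN [] (S n)) with 1. rewrite Rmult_1_r.
      set (y := INR (S n)) in *. assert (Hy : 1 <= y) by (apply (le_INR 1); lia).
      replace (INR (S (S n))) with (y + 1) by (unfold y; rewrite (S_INR (S n)); reflexivity).
      assert (/ (y + 1) ^ 2 <= / y - / (y + 1)).
      { replace (/ y - / (y + 1)) with (/ (y * (y + 1))) by (field; lra).
        apply Rinv_le_contravar; [nra|simpl; nra]. }
      lra. }
  destruct N as [|N]; [change (mzvN [2%nat] 0) with 0; lra|].
  pose proof (H N). pose proof (Rinv_0_lt_compat _ (INR_S_pos N)). lra.
Qed.

Lemma Forall2_repeat_one r :
  Forall (fun x => (1 <= x)%nat) r -> Forall2 (fun x y => (y <= x)%nat) r (repeat 1%nat (length r)).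
Proof. induction 1; constructor; assumption. Qed.

Lemma Forall_repeat_one n : Forall (fun x => (1 <= x)%nat) (repeat 1%nat n).
Proof. induction n; constructor; auto. Qed.

(* Duality bounds [zeta_N(2, 1, ..., 1)] of depth [d] by values [zeta_M(d + 1) <= 2], and
   it dominates every truncated MZV of depth [d] with first entry at least [2]. *)
Lemma mzvN_le_two a r N :
  (2 <= a)%nat -> Forall (fun x => (1 <= x)%nat) r -> mzvN (a :: r) N <= 2.
Proof.
  intros Ha Hr.
  apply Rle_trans with (mzvN (2%nat :: repeat 1%nat (length r)) N).
  { apply mzvN_antitone. constructor; [exact Ha|now apply Forall2_repeat_one]. }
  apply (sup_le_bound _ (fun M => mzvN [S (S (length r))] M) 2 (proj1 (sup_eq_duality 0 (length r)))).
  intros M. apply Rle_trans with (mzvN [2%nat] M); [|apply mzvN_two_le].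
  apply mzvN_antitone. constructor; [lia|constructor].
Qed.

Lemma Un_cv_le_bound (u : nat -> R) l K : Un_cv u l -> (forall n, u n <= K) -> l <= K.
Proof.
  intros H Hu. apply Rnot_lt_le; intros Hc. destruct (H (l - K)) as (N & HN); [lra|].
  specialize (HN N (le_n _)). specialize (Hu N). unfold R_dist in HN. apply Rabs_def2 in HN. lra.
Qed.

Lemma mzv_spec l L : Un_cv (mzvN l) L -> mzv l = L.
Proof.
  intros H. unfold mzv.
  pose proof (epsilon_spec (inhabits 0) (fun L => Un_cv (mzvN l) L) (ex_intro _ L H)) as H2.
  exact (UL_sequence _ _ _ H2 H).
Qed.

Lemma mzvN_cv a r :
  (2 <= a)%nat -> Forall (fun x => (1 <= x)%nat) r -> Un_cv (mzvN (a :: r)) (mzv (a :: r)).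
Proof.
  intros Ha Hr.
  destruct (growing_cv (mzvN (a :: r)) (mzvN_increasing _)) as [L HL].
  - exists 2. intros x [N ->]. now apply mzvN_le_two.
  - now rewrite (mzv_spec _ L HL).
Qed.

Lemma mzv_duality a b : mzv (S (S a) :: repeat 1%nat b) = mzv (S (S b) :: repeat 1%nat a).
Proof.
  pose proof (mzvN_cv (S (S a)) (repeat 1%nat b) ltac:(lia) (Forall_repeat_one b)) as H1.
  pose proof (mzvN_cv (S (S b)) (repeat 1%nat a) ltac:(lia) (Forall_repeat_one a)) as H2.
  destruct (sup_eq_duality a b) as [D1 D2].
  apply Rle_antisym.
  - apply (Un_cv_le_bound _ _ _ H1), (sup_le_bound _ _ _ D1).
    apply growing_ineq; [apply mzvN_increasing|exact H2].
  - apply (Un_cv_le_bound _ _ _ H2), (sup_le_bound _ _ _ (sup_le_transpose _ _ D2)).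
    apply growing_ineq; [apply mzvN_increasing|exact H1].
Qed.

(** * Newton's identities for [Ppoly] and [Qpoly] *)

Section PartitionSums.

Variable signed : bool.
Variable y : nat -> R.

Definition pq_sign (i : nat) : R := if andb signed (Nat.even i) then -1 else 1.

Definition pq_factor (s x : nat) : R :=
  (if andb signed (Nat.even s) then (-1) ^ x else 1) * / INR (fact x) * (y s / INR s) ^ x.

(* The sum of [PQterm] over multiplicity vectors [(m_s, ..., m_(s+L-1))] with entries
   at most [B] and weight [s m_s + ... = n]; [Ppoly] and [Qpoly] are the case [s = 1],
   [L = B = n]. *)
Definition pq_sum (s L B n : nat) : R :=
  lsum (tuples L B) (fun m => if Nat.eqb (weight_from s m) n then PQterm signed s m y else 0).

Lemma pq_factor_0 s : pq_factor s 0 = 1.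
Proof. unfold pq_factor. simpl. destruct (signed && Nat.even s)%bool; simpl; field. Qed.

Lemma pq_factor_succ s x : (1 <= s)%nat ->
  INR (s * S x) * pq_factor s (S x) = pq_sign s * y s * pq_factor s x.
Proof.
  intros Hs. unfold pq_factor, pq_sign. rewrite fact_simpl, !mult_INR.
  assert (INR s <> 0) by (apply not_0_INR; lia). pose proof (INR_fact_neq_0 x).
  assert (INR (S x) <> 0) by (apply not_0_INR; lia).
  destruct (signed && Nat.even s)%bool; simpl pow; field; auto.
Qed.

Lemma pq_sum_len_0 s B n : pq_sum s 0 B n = if Nat.eqb 0 n then 1 else 0.
Proof. unfold pq_sum. simpl tuples. rewrite lsum_cons, lsum_nil. simpl. destruct (Nat.eqb 0 n); ring. Qed.

Lemma pq_sum_len_S s L B n : pq_sum s (S L) B n =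
  lsum (seq 0 (S B)) (fun x => if Nat.leb (s * x) n then pq_factor s x * pq_sum (S s) L B (n - s * x) else 0).
Proof.
  unfold pq_sum at 1. cbn [tuples]. rewrite lsum_flat_map. apply lsum_ext; intros x. rewrite lsum_map.
  destruct (Nat.leb_spec (s * x) n).
  - unfold pq_sum. rewrite <- lsum_scal. apply lsum_ext; intros r. cbn [weight_from PQterm].
    destruct (Nat.eqb_spec (s * x + weight_from (S s) r) n),
      (Nat.eqb_spec (weight_from (S s) r) (n - s * x)); try lia; unfold pq_factor; ring.
  - apply lsum_zero; intros r _. cbn [weight_from].
    destruct (Nat.eqb_spec (s * x + weight_from (S s) r) n); [lia|reflexivity].
Qed.

Lemma pq_sum_len_succ s L B n : (n < s + L)%nat -> pq_sum s (S L) B n = pq_sum s L B n.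
Proof.
  revert s n; induction L as [|L IH]; intros s n Hn.
  - rewrite pq_sum_len_S, pq_sum_len_0, seq_0_S, lsum_cons, lsum_map, lsum_zero.
    + rewrite Nat.mul_0_r, pq_factor_0, pq_sum_len_0, Nat.sub_0_r. simpl. destruct (Nat.eqb 0 n); ring.
    + intros x _. destruct (Nat.leb_spec (s * S x) n); [nia|reflexivity].
  - rewrite !pq_sum_len_S. apply lsum_ext; intros x.
    destruct (Nat.leb_spec (s * x) n); [rewrite IH by lia|]; reflexivity.
Qed.

Lemma pq_sum_bound_succ s L B n : (1 <= s)%nat -> (n <= B)%nat -> pq_sum s L (S B) n = pq_sum s L B n.
Proof.
  revert s n; induction L as [|L IH]; intros s n Hs Hn; [rewrite !pq_sum_len_0; reflexivity|].
  rewrite !pq_sum_len_S, (seq_S (S B)), lsum_app, lsum_cons, lsum_nil.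
  replace (if Nat.leb (s * (0 + S B)) n then _ else 0) with 0.
  - rewrite !Rplus_0_r. apply lsum_ext; intros x.
    destruct (Nat.leb_spec (s * x) n); [rewrite IH by lia|]; reflexivity.
  - destruct (Nat.leb_spec (s * (0 + S B)) n); [nia|reflexivity].
Qed.

Lemma pq_sum_len_le s L L' B n : (n < s + L)%nat -> (L <= L')%nat -> pq_sum s L' B n = pq_sum s L B n.
Proof.
  intros Hn HL. induction HL as [|L' HL IH]; [reflexivity|].
  rewrite pq_sum_len_succ by lia. exact IH.
Qed.

Lemma pq_sum_bound_le s L B B' n : (1 <= s)%nat -> (n <= B)%nat -> (B <= B')%nat ->
  pq_sum s L B' n = pq_sum s L B n.
Proof.
  intros Hs Hn HB. induction HB as [|B' HB IH]; [reflexivity|].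
  rewrite pq_sum_bound_succ by lia. exact IH.
Qed.

Lemma pq_sum_newton_head s L B n : (1 <= s)%nat -> (n <= B)%nat ->
  lsum (seq 0 (S B)) (fun x => if Nat.leb (s * x) n
                               then INR (s * x) * pq_factor s x * pq_sum (S s) L B (n - s * x) else 0)
  = if Nat.leb s n then pq_sign s * y s * pq_sum s (S L) B (n - s) else 0.
Proof.
  intros Hs Hn. rewrite seq_0_S, lsum_cons, lsum_map, Nat.mul_0_r. simpl Nat.leb.
  rewrite !Rmult_0_l, Rplus_0_l. destruct (Nat.leb_spec s n).
  - rewrite pq_sum_len_S, seq_S, lsum_app, lsum_cons, lsum_nil.
    replace (if Nat.leb (s * (0 + B)) (n - s) then _ else 0) with 0
      by (destruct (Nat.leb_spec (s * (0 + B)) (n - s)); [nia|reflexivity]).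
    rewrite !Rplus_0_r, <- lsum_scal. apply lsum_ext; intros x.
    destruct (Nat.leb_spec (s * S x) n), (Nat.leb_spec (s * x) (n - s)); try nia; try ring.
    rewrite pq_factor_succ by exact Hs. replace (n - s * S x)%nat with (n - s - s * x)%nat by nia. ring.
  - apply lsum_zero; intros x _. destruct (Nat.leb_spec (s * S x) n); [nia|reflexivity].
Qed.

Lemma pq_sum_newton_tail s L B n :
  (forall m, (m <= B)%nat -> INR m * pq_sum (S s) L B m =
     lsum (seq (S s) L) (fun i => if Nat.leb i m then pq_sign i * y i * pq_sum (S s) L B (m - i) else 0)) ->
  (n <= B)%nat ->
  lsum (seq 0 (S B)) (fun x => if Nat.leb (s * x) n
                               then pq_factor s x * (INR (n - s * x) * pq_sum (S s) L B (n - s * x)) else 0)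
  = lsum (seq (S s) L) (fun i => if Nat.leb i n then pq_sign i * y i * pq_sum s (S L) B (n - i) else 0).
Proof.
  intros Hnewton Hn.
  transitivity (lsum (seq 0 (S B)) (fun x => lsum (seq (S s) L) (fun i =>
      if Nat.leb (s * x + i) n
      then pq_factor s x * (pq_sign i * y i * pq_sum (S s) L B (n - s * x - i)) else 0))).
  - apply lsum_ext; intros x. destruct (Nat.leb_spec (s * x) n).
    + rewrite Hnewton, <- lsum_scal by lia. apply lsum_ext; intros i.
      destruct (Nat.leb_spec i (n - s * x)), (Nat.leb_spec (s * x + i) n); try lia; ring.
    + symmetry; apply lsum_zero; intros i _. destruct (Nat.leb_spec (s * x + i) n); [lia|reflexivity].
  - rewrite lsum_swap. apply lsum_ext; intros i. destruct (Nat.leb_spec i n).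
    + rewrite pq_sum_len_S, <- lsum_scal. apply lsum_ext; intros x.
      destruct (Nat.leb_spec (s * x) (n - i)), (Nat.leb_spec (s * x + i) n); try lia; try ring.
      replace (n - i - s * x)%nat with (n - s * x - i)%nat by lia. ring.
    + apply lsum_zero; intros x _. destruct (Nat.leb_spec (s * x + i) n); [lia|reflexivity].
Qed.

(* Newton's identity comes from [n = sum_i i m_i] for a vector of weight [n], together
   with [pq_factor_succ]. *)
Lemma pq_sum_newton L : forall s B n, (1 <= s)%nat -> (n <= B)%nat ->
  INR n * pq_sum s L B n =
  lsum (seq s L) (fun i => if Nat.leb i n then pq_sign i * y i * pq_sum s L B (n - i) else 0).
Proof.
  induction L as [|L IH]; intros s B n Hs Hn.
  - rewrite pq_sum_len_0. cbn [seq]. rewrite lsum_nil. destruct (Nat.eqb_spec 0 n); [subst; simpl|]; ring.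
  - rewrite pq_sum_len_S.
    transitivity (
      lsum (seq 0 (S B)) (fun x => if Nat.leb (s * x) n
                                   then INR (s * x) * pq_factor s x * pq_sum (S s) L B (n - s * x) else 0)
      + lsum (seq 0 (S B)) (fun x => if Nat.leb (s * x) n
                                   then pq_factor s x * (INR (n - s * x) * pq_sum (S s) L B (n - s * x)) else 0)).
    + rewrite <- lsum_plus, <- lsum_scal. apply lsum_ext; intros x.
      destruct (Nat.leb_spec (s * x) n); [|ring].
      replace (INR n) with (INR (s * x) + INR (n - s * x)) by (rewrite <- plus_INR; f_equal; lia). ring.
    + rewrite pq_sum_newton_head, pq_sum_newton_tail
        by (assumption || (intros m Hm; apply IH; lia)).
      reflexivity.
Qed.

Definition pq_poly (k : nat) : R := pq_sum 1 k k k.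

Lemma pq_poly_0 : pq_poly 0 = 1.
Proof. unfold pq_poly. rewrite pq_sum_len_0. reflexivity. Qed.

Lemma pq_poly_newton k : INR k * pq_poly k = lsum (seq 1 k) (fun i => pq_sign i * y i * pq_poly (k - i)).
Proof.
  unfold pq_poly. rewrite pq_sum_newton by lia. apply lsum_ext_in; intros i Hi. apply in_seq in Hi.
  destruct (Nat.leb_spec i k); [|lia].
  rewrite (pq_sum_bound_le 1 k (k - i) k (k - i)), (pq_sum_len_le 1 (k - i) k (k - i) (k - i)) by lia.
  reflexivity.
Qed.

End PartitionSums.

Lemma Ppoly_pq_poly k y : Ppoly k y = pq_poly true y k.
Proof.
  unfold Ppoly, part_vectors, pq_poly, pq_sum.
  fold (lsum (filter (fun m => Nat.eqb (weight_from 1 m) k) (tuples k k)) (fun m => PQterm true 1 m y)).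
  apply lsum_filter.
Qed.

Lemma Qpoly_pq_poly k y : Qpoly k y = pq_poly false y k.
Proof.
  unfold Qpoly, part_vectors, pq_poly, pq_sum.
  fold (lsum (filter (fun m => Nat.eqb (weight_from 1 m) k) (tuples k k)) (fun m => PQterm false 1 m y)).
  apply lsum_filter.
Qed.

Lemma newton_unique (a b c : nat -> R) : a 0%nat = 1 -> b 0%nat = 1 ->
  (forall k, INR k * a k = lsum (seq 1 k) (fun i => c i * a (k - i)%nat)) ->
  (forall k, INR k * b k = lsum (seq 1 k) (fun i => c i * b (k - i)%nat)) -> forall k, a k = b k.
Proof.
  intros Ha Hb HA HB.
  assert (H : forall k j, (j <= k)%nat -> a j = b j).
  { induction k as [|k IH]; intros j Hj; [replace j with 0%nat by lia; congruence|].
    destruct (Nat.eq_dec j (S k)); [subst j|apply IH; lia].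
    apply Rmult_eq_reg_l with (INR (S k)); [|apply not_0_INR; lia].
    rewrite HA, HB. apply lsum_ext_in; intros i Hi. apply in_seq in Hi. rewrite IH by lia. reflexivity. }
  intros k; apply (H k); lia.
Qed.

(** * Symmetric functions of [1, 1/2, ..., 1/M] *)

Definition pred_value (f : nat -> R) (k : nat) : R := match k with 0%nat => 0 | S k' => f k' end.

Lemma lsum_pred_value n (g f : nat -> R) :
  lsum (seq 1 (S n)) (fun i => g i * pred_value f (S n - i))
  = lsum (seq 1 n) (fun i => g i * f (n - i)%nat).
Proof.
  rewrite lsum_seq_S_r, Nat.sub_diag. cbn [pred_value]. rewrite Rmult_0_r, Rplus_0_r.
  apply lsum_ext_in; intros i Hi. apply in_seq in Hi.
  replace (S n - i)%nat with (S (n - i)) by lia. reflexivity.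
Qed.

Definition esym (k M : nat) : R := mzvN (repeat 1%nat k) M.

Lemma esym_succ k M : esym k (S M) = esym k M + / INR (S M) * pred_value (fun j => esym j M) k.
Proof.
  unfold esym. destruct k as [|k]; cbn [repeat pred_value].
  - change (mzvN [] (S M)) with 1. change (mzvN [] M) with 1. ring.
  - rewrite mzvN_S, pow_1. reflexivity.
Qed.

Lemma esym_0_r k : esym (S k) 0 = 0.
Proof. reflexivity. Qed.

Lemma alternating_pow_shift x (f : nat -> R) k :
  lsum (seq 1 (S k)) (fun i => pq_sign true i * x ^ i * f (S k - i)%nat)
  + x * lsum (seq 1 k) (fun i => pq_sign true i * x ^ i * f (k - i)%nat) = x * f k.
Proof.
  rewrite lsum_seq_S_l, Nat.sub_succ, Nat.sub_0_r, pow_1, <- lsum_scal.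
  unfold pq_sign at 1. simpl Nat.even. cbn [andb].
  rewrite Rplus_assoc, <- lsum_plus, lsum_zero; [ring|].
  intros i _. rewrite Nat.sub_succ. unfold pq_sign. rewrite Nat.even_succ, <- Nat.negb_even.
  destruct (Nat.even i); simpl; ring.
Qed.

Lemma esym_newton M : forall k,
  INR k * esym k M = lsum (seq 1 k) (fun i => pq_sign true i * Hn M i * esym (k - i) M).
Proof.
  induction M as [|M IH]; intros k.
  - rewrite lsum_zero by (intros; rewrite Hn_0; ring).
    destruct k as [|k]; [rewrite Rmult_0_l; reflexivity|rewrite esym_0_r; ring].
  - destruct k as [|k]; [rewrite Rmult_0_l; reflexivity|].
    set (x := / INR (S M)).
    transitivity (lsum (seq 1 (S k)) (fun i => pq_sign true i * Hn M i * esym (S k - i) M)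
      + x * lsum (seq 1 (S k)) (fun i => pq_sign true i * Hn M i * pred_value (fun j => esym j M) (S k - i))
      + (lsum (seq 1 (S k)) (fun i => pq_sign true i * x ^ i * esym (S k - i) M)
         + x * lsum (seq 1 (S k)) (fun i => pq_sign true i * x ^ i * pred_value (fun j => esym j M) (S k - i)))).
    + rewrite !lsum_pred_value, (alternating_pow_shift x (fun j => esym j M) k), <- IH, <- IH.
      rewrite esym_succ. fold x. simpl pred_value. rewrite (S_INR k). ring.
    + rewrite <- !lsum_scal, <- !lsum_plus. apply lsum_ext; intros i.
      rewrite Hn_S, esym_succ. fold x. ring.
Qed.

Lemma Ppoly_Hn_esym k M : Ppoly k (fun i => Hn M i) = esym k M.
Proof.
  rewrite Ppoly_pq_poly.
  apply (newton_unique (pq_poly true (fun i => Hn M i)) (fun j => esym j M)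
                       (fun i => pq_sign true i * Hn M i)).
  - apply pq_poly_0.
  - reflexivity.
  - intros j. apply pq_poly_newton.
  - intros j. apply esym_newton.
Qed.

Lemma flat_map_nil {A B} (f : A -> list B) l : (forall a, In a l -> f a = []) -> flat_map f l = [].
Proof.
  induction l as [|a l IH]; intros H; [reflexivity|].
  cbn [flat_map]. rewrite H, IH; [reflexivity| |now left]. intros; apply H; now right.
Qed.

Lemma compositions_short d : forall N, (N < d)%nat -> compositions N d = [].
Proof.
  induction d as [|d IH]; intros N H; [lia|]. apply flat_map_nil. intros a Ha. apply in_seq in Ha.
  rewrite IH by lia. reflexivity.
Qed.

Lemma compositions_pos d : forall N c, In c (compositions N d) -> Forall (fun x => (1 <= x)%nat) c.
Proof.
  induction d as [|d IH]; intros N c H.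
  - cbn in H. destruct (Nat.eqb N 0); [destruct H as [<-|[]]; constructor|destruct H].
  - apply in_flat_map in H. destruct H as (a & Ha & H). apply in_map_iff in H.
    destruct H as (c' & <- & Hc'). apply in_seq in Ha. constructor; [lia|]. eapply IH; eauto.
Qed.

Lemma compositions_S_cons N d c : In c (compositions N (S d)) -> exists a c', c = a :: c'.
Proof.
  intros H. apply in_flat_map in H. destruct H as (a & _ & H). apply in_map_iff in H.
  destruct H as (c' & <- & _). eauto.
Qed.

Lemma lsum_compositions_S N d (F : list nat -> R) :
  lsum (compositions N (S d)) F
  = lsum (seq 1 N) (fun a => lsum (compositions (N - a) d) (fun c => F (a :: c))).
Proof. cbn [compositions]. rewrite lsum_flat_map. apply lsum_ext; intros a. apply lsum_map. Qed.

Definition comp_mzvN (r d M : nat) : R := lsum (compositions r d) (fun c => mzvN c M).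

(* The complete homogeneous symmetric function [h_r(1, 1/2, ..., 1/M)]: a monomial of degree
   [r] in these variables, read from its largest variable down, is a composition of [r]
   of some depth [d] together with a decreasing choice of [d] variables. *)
Definition hsym (r M : nat) : R := lsum (seq 0 (S r)) (fun d => comp_mzvN r d M).

Lemma hsym_seq_long r L M : (r < L)%nat -> lsum (seq 0 L) (fun d => comp_mzvN r d M) = hsym r M.
Proof.
  intros H. replace (seq 0 L) with (seq 0 (S r) ++ seq (0 + S r) (L - S r))
    by (rewrite <- seq_app; f_equal; lia).
  rewrite lsum_app, (lsum_zero (seq (0 + S r) _)); [unfold hsym; ring|].
  intros d Hd. apply in_seq in Hd. unfold comp_mzvN. rewrite compositions_short by lia. reflexivity.
Qed.

Lemma hsym_0_l M : hsym 0 M = 1.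
Proof.
  unfold hsym, comp_mzvN. cbn [seq]. rewrite lsum_cons, lsum_nil.
  change (compositions 0 0) with [@nil nat]. rewrite lsum_cons, lsum_nil.
  change (mzvN [] M) with 1. ring.
Qed.

Lemma hsym_0_r r : hsym (S r) 0 = 0.
Proof.
  unfold hsym. rewrite seq_0_S, lsum_cons, lsum_map, lsum_zero.
  - unfold comp_mzvN. destruct r; cbn [compositions Nat.eqb]; rewrite lsum_nil; ring.
  - intros d _. apply lsum_zero. intros c Hc.
    destruct (compositions_S_cons _ _ _ Hc) as (a & c' & ->). apply mzvN_0.
Qed.

Lemma hsym_S r M : hsym r (S M) = hsym r M + lsum (seq 1 r) (fun a => (/ INR (S M)) ^ a * hsym (r - a) M).
Proof.
  transitivity (hsym r M + lsum (seq 0 (S r)) (fun d => lsum (compositions r d) (fun c => mzv_term c (S M)))).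
  { unfold hsym, comp_mzvN. rewrite <- lsum_plus. apply lsum_ext; intros d.
    rewrite <- lsum_plus. apply lsum_ext; intros c. apply mzvN_succ. }
  f_equal. rewrite seq_0_S, lsum_cons, lsum_map.
  replace (lsum (compositions r 0) (fun c => mzv_term c (S M))) with 0
    by (cbn; destruct (Nat.eqb r 0); cbn; ring).
  rewrite Rplus_0_l.
  transitivity (lsum (seq 0 r) (fun d =>
    lsum (seq 1 r) (fun a => (/ INR (S M)) ^ a * comp_mzvN (r - a) d M))).
  { apply lsum_ext; intros d. rewrite lsum_compositions_S. apply lsum_ext; intros a.
    unfold comp_mzvN. rewrite <- lsum_scal. apply lsum_ext; intros c.
    rewrite mzv_term_cons_S, pow_inv. reflexivity. }
  rewrite lsum_swap. apply lsum_ext_in; intros a Ha. apply in_seq in Ha.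
  rewrite lsum_scal, hsym_seq_long by lia. reflexivity.
Qed.

Lemma hsym_succ r M : hsym (S r) (S M) = hsym (S r) M + / INR (S M) * hsym r (S M).
Proof.
  rewrite !hsym_S, lsum_seq_S_l, Nat.sub_succ, Nat.sub_0_r, pow_1, Rmult_plus_distr_l, <- lsum_scal.
  do 2 f_equal. apply lsum_ext; intros a. rewrite Nat.sub_succ, <- tech_pow_Rmult. ring.
Qed.

Lemma hsym_succ_pred j M : hsym j (S M) = hsym j M + / INR (S M) * pred_value (fun i => hsym i (S M)) j.
Proof. destruct j as [|j]; [rewrite !hsym_0_l; cbn [pred_value]; ring|apply hsym_succ]. Qed.

Lemma lsum_pow_shift x (f : nat -> R) k :
  lsum (seq 1 (S k)) (fun i => x ^ i * f (S k - i)%nat)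
  = x * f k + x * lsum (seq 1 k) (fun i => x ^ i * f (k - i)%nat).
Proof.
  rewrite lsum_seq_S_l, <- lsum_scal, Nat.sub_succ, Nat.sub_0_r, pow_1. f_equal.
  apply lsum_ext; intros i. rewrite Nat.sub_succ. simpl pow. ring.
Qed.

Lemma hsym_newton M : forall k, INR k * hsym k M = lsum (seq 1 k) (fun i => Hn M i * hsym (k - i) M).
Proof.
  induction M as [|M IH]; intros k.
  - rewrite lsum_zero by (intros; rewrite Hn_0; ring).
    destruct k as [|k]; [rewrite Rmult_0_l; reflexivity|rewrite hsym_0_r; ring].
  - set (x := / INR (S M)). induction k as [|k IHk]; [rewrite Rmult_0_l; reflexivity|].
    transitivity (lsum (seq 1 (S k)) (fun i => Hn M i * hsym (S k - i) M)
      + x * lsum (seq 1 (S k)) (fun i => Hn M i * pred_value (fun j => hsym j (S M)) (S k - i))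
      + lsum (seq 1 (S k)) (fun i => x ^ i * hsym (S k - i) (S M))).
    + rewrite lsum_pred_value, (lsum_pow_shift x (fun j => hsym j (S M)) k), <- IH, hsym_succ. fold x.
      assert (Hk : INR k * hsym k (S M) = lsum (seq 1 k) (fun i => Hn M i * hsym (k - i) (S M))
                                          + lsum (seq 1 k) (fun i => x ^ i * hsym (k - i) (S M))).
      { rewrite IHk, <- lsum_plus. apply lsum_ext; intros i. rewrite Hn_S. fold x. ring. }
      rewrite S_INR.
      transitivity ((INR k + 1) * hsym (S k) M + x * (INR k * hsym k (S M)) + x * hsym k (S M)); [ring|].
      rewrite Hk. ring.
    + rewrite <- !lsum_scal, <- !lsum_plus. apply lsum_ext; intros i.
      rewrite Hn_S, (hsym_succ_pred (S k - i) M). fold x. ring.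
Qed.

Lemma Qpoly_Hn_hsym k M : Qpoly k (fun i => Hn M i) = hsym k M.
Proof.
  rewrite Qpoly_pq_poly.
  apply (newton_unique (pq_poly false (fun i => Hn M i)) (fun j => hsym j M)
                       (fun i => pq_sign false i * Hn M i)).
  - apply pq_poly_0.
  - apply hsym_0_l.
  - intros j. apply pq_poly_newton.
  - intros j. rewrite hsym_newton. apply lsum_ext; intros i. unfold pq_sign. simpl. ring.
Qed.

Lemma sum_Hn_over_cube k : (1 <= k)%nat ->
  infinite_sum (fun n => Hn (S n) k / INR (S n) ^ 3) (mzv [(k + 3)%nat] + mzv [3%nat; k]).
Proof.
  intros Hk. apply infinite_sum_telescoping with (F := fun N => mzvN [(k + 3)%nat] N + mzvN [3%nat; k] N).
  - rewrite !mzvN_0. ring.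
  - intros n. rewrite !mzvN_S, Hn_mzvN, mzvN_S, (inv_pow_add _ k 3) by apply not_0_INR, Nat.neq_succ_0.
    change (mzvN [] n) with 1. unfold Rdiv. ring.
  - apply CV_plus; apply mzvN_cv; repeat constructor; lia.
Qed.

Lemma sum_Ppoly_over_cube k : (1 <= k)%nat ->
  infinite_sum (fun n => Ppoly k (fun i => Hn (S n) i) / INR (S n) ^ 3)
    (mzv [(k + 2)%nat; 1%nat] + mzv [(k + 1)%nat; 1%nat; 1%nat]).
Proof.
  intros Hk. destruct k as [|k]; [lia|].
  replace (mzv [(S k + 2)%nat; 1%nat] + mzv [(S k + 1)%nat; 1%nat; 1%nat])
    with (mzv (3%nat :: repeat 1%nat (S k)) + mzv (4%nat :: repeat 1%nat k))
    by (rewrite (mzv_duality 1 (S k)), (mzv_duality 2 k); do 3 f_equal; lia).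
  apply infinite_sum_telescoping
    with (F := fun N => mzvN (3%nat :: repeat 1%nat (S k)) N + mzvN (4%nat :: repeat 1%nat k) N).
  - rewrite !mzvN_0. ring.
  - intros n. rewrite !mzvN_S, Ppoly_Hn_esym, esym_succ.
    rewrite (inv_pow_add _ 3 1), pow_1 by apply not_0_INR, Nat.neq_succ_0.
    unfold esym. cbn [pred_value repeat]. unfold Rdiv. ring.
  - apply CV_plus; apply mzvN_cv; auto using Forall_repeat_one with arith.
Qed.

Definition first_ge3 (N d : nat) : list (list nat) :=
  filter (fun a => Nat.leb 3 (hd O a)) (compositions N d).

Lemma ST_depth_one k : ST (k + 3) 1 = mzv [(k + 3)%nat].
Proof.
  unfold ST. fold (lsum (filter (fun a => Nat.leb 3 (hd O a)) (compositions (k + 3) 1)) mzv).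
  rewrite lsum_filter, lsum_compositions_S.
  replace (k + 3)%nat with (S (k + 2)) at 1 by lia.
  rewrite lsum_seq_S_r, lsum_zero.
  - replace (k + 3 - S (k + 2))%nat with 0%nat by lia. change (compositions 0 0) with [@nil nat].
    rewrite lsum_cons, lsum_nil. cbn [hd].
    destruct (Nat.leb_spec 3 (S (k + 2))); [|lia]. replace (S (k + 2)) with (k + 3)%nat by lia. ring.
  - intros a Ha. apply in_seq in Ha. cbn [compositions].
    destruct (Nat.eqb_spec (k + 3 - a) 0); [lia|reflexivity].
Qed.

Lemma first_ge3_terms_depth k d n :
  lsum (first_ge3 (k + 3) (S d)) (fun c => mzv_term c (S n))
  = lsum (seq 0 (S k)) (fun j => (/ INR (S n)) ^ (3 + j) * comp_mzvN (k - j) d n).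
Proof.
  unfold first_ge3. rewrite lsum_filter, lsum_compositions_S.
  transitivity (lsum (seq 1 (k + 3)) (fun a =>
    if Nat.leb 3 a then (/ INR (S n)) ^ a * comp_mzvN (k + 3 - a) d n else 0)).
  { apply lsum_ext; intros a. cbn [hd]. destruct (Nat.leb 3 a); [|apply lsum_zero; reflexivity].
    unfold comp_mzvN. rewrite <- lsum_scal. apply lsum_ext; intros c.
    rewrite mzv_term_cons_S, pow_inv. reflexivity. }
  replace (k + 3)%nat with (2 + S k)%nat at 1 by lia. rewrite seq_app, lsum_app, (lsum_zero (seq 1 2)).
  - change (1 + 2)%nat with (3 + 0)%nat. rewrite Rplus_0_l, seq_add_start, lsum_map.
    apply lsum_ext; intros j. destruct (Nat.leb_spec 3 (3 + j)); [|lia].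
    replace (k + 3 - (3 + j))%nat with (k - j)%nat by lia. reflexivity.
  - intros a Ha. apply in_seq in Ha. destruct (Nat.leb_spec 3 a); [lia|reflexivity].
Qed.

Lemma first_ge3_terms k n :
  lsum (seq 1 (S k)) (fun d => lsum (first_ge3 (k + 3) d) (fun c => mzv_term c (S n)))
  = hsym k (S n) / INR (S n) ^ 3.
Proof.
  rewrite <- seq_shift, lsum_map.
  rewrite (lsum_ext _ _
             (fun d => lsum (seq 0 (S k)) (fun j => (/ INR (S n)) ^ (3 + j) * comp_mzvN (k - j) d n)))
    by (intros d; apply first_ge3_terms_depth).
  rewrite lsum_swap.
  transitivity (lsum (seq 0 (S k)) (fun j => (/ INR (S n)) ^ (3 + j) * hsym (k - j) n)).
  { apply lsum_ext; intros j. rewrite lsum_scal, hsym_seq_long by lia. reflexivity. }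
  rewrite hsym_S, seq_0_S, lsum_cons, lsum_map, <- seq_shift, lsum_map.
  unfold Rdiv. rewrite <- pow_inv, (Rmult_comm (_ + _)), Rmult_plus_distr_l, <- lsum_scal.
  f_equal; [rewrite Nat.add_0_r, Nat.sub_0_r; ring|].
  apply lsum_ext; intros j. rewrite pow_add. ring.
Qed.

Lemma sum_Qpoly_over_cube k :
  infinite_sum (fun n => Qpoly k (fun i => Hn (S n) i) / INR (S n) ^ 3)
    (mzv [(k + 3)%nat] + fold_right Rplus 0 (map (fun j => ST (k + 3) j) (seq 2 k))).
Proof.
  replace (mzv [(k + 3)%nat] + fold_right Rplus 0 (map (fun j => ST (k + 3) j) (seq 2 k)))
    with (lsum (seq 1 (S k)) (fun d => lsum (first_ge3 (k + 3) d) mzv))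
    by (rewrite <- ST_depth_one; reflexivity).
  apply infinite_sum_telescoping
    with (F := fun N => lsum (seq 1 (S k)) (fun d => lsum (first_ge3 (k + 3) d) (fun c => mzvN c N))).
  - apply lsum_zero; intros d Hd. apply in_seq in Hd. destruct d as [|d]; [lia|].
    apply lsum_zero; intros c Hc. apply filter_In in Hc.
    destruct (compositions_S_cons _ _ _ (proj1 Hc)) as (a & c' & ->). apply mzvN_0.
  - intros n. rewrite Qpoly_Hn_hsym, <- first_ge3_terms.
    assert (Hsplit : lsum (seq 1 (S k)) (fun d => lsum (first_ge3 (k + 3) d) (fun c => mzvN c (S n)))
      = lsum (seq 1 (S k)) (fun d => lsum (first_ge3 (k + 3) d) (fun c => mzvN c n))
        + lsum (seq 1 (S k)) (fun d => lsum (first_ge3 (k + 3) d) (fun c => mzv_term c (S n)))).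
    { rewrite <- lsum_plus. apply lsum_ext; intros d.
      rewrite <- lsum_plus. apply lsum_ext; intros c. apply mzvN_succ. }
    rewrite Hsplit. ring.
  - apply (lsum_cv _ (fun d N => lsum (first_ge3 (k + 3) d) (fun c => mzvN c N))); intros d _.
    apply (lsum_cv _ (fun c N => mzvN c N)); intros c Hc. apply filter_In in Hc. destruct Hc as [Hc H3].
    destruct c as [|a r]; [discriminate H3|]. apply Nat.leb_le in H3.
    apply mzvN_cv; [cbn in H3; lia|]. apply compositions_pos in Hc. inversion Hc; assumption.
Qed.

Theorem mainTheorem15 (k : nat) (hk : (1 <= k)%nat) :
  infinite_sum (fun n => Hn (S n) k / INR (S n) ^ 3)
    (mzv [(k + 3)%nat] + mzv [3%nat; k])
  /\
  infinite_sum (fun n => Ppoly k (fun i => Hn (S n) i) / INR (S n) ^ 3)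
    (mzv [(k + 2)%nat; 1%nat] + mzv [(k + 1)%nat; 1%nat; 1%nat])
  /\
  infinite_sum (fun n => Qpoly k (fun i => Hn (S n) i) / INR (S n) ^ 3)
    (mzv [(k + 3)%nat]
     + fold_right Rplus 0 (map (fun j => ST (k + 3) j) (seq 2 k))).
Proof.
  split; [|split].
  - exact (sum_Hn_over_cube k hk).
  - exact (sum_Ppoly_over_cube k hk).
  - exact (sum_Qpoly_over_cube k).
Qed.
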